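(* Let $\pi\in\mathfrak M'_S$, put $V_0=\mathrm{Im}(\pi)$, let $i,j\in V_0$ be orthonormal, $k=i\times j$, let $\ell\in V_0^\perp$ be a unit vector, and set $v_0=\ell$, $v_1=i\times\ell$, $v_2=j\times\ell$, $v_3=k\times\ell$. Then for any $(a_0,a_1,a_2,a_3),(b_0,b_1,b_2,b_3)\in\mathbb R^4$ there is a unique $d\in T_\pi(\mathfrak M'_S)$ with $d(i)=\sum_{r=0}^3 a_rv_r$ and $d(j)=\sum_{r=0}^3 b_rv_r$. Consequently $\dim T_\pi(\mathfrak M'_S)=8$. Moreover, $T_\pi(\mathfrak M'_S)$ is a Lie triple subsystem of $T_\pi(\mathrm{Gr}_3(\mathbb R^7))$ (with triple product $[[d_1,d_2],d_3]$).
   Context: Let $\langle\cdot,\cdot\rangle$ be the standard inner product on $\mathbb R^7$ and $\times$ the cross product on $\mathbb R^7$ determined by $e_i\times e_{i+1}=e_{i+3}$, $e_{i+1}\times e_{i+3}=e_i$, $e_{i+3}\times e_i=e_{i+1}$ (indices mod 7, anticommutative, bilinear). Let $\Omega(x,y,z)=\langle x\times y,z\rangle$. $\mathrm{Gr}_3(\mathbb R^7)=\{\pi\in\mathrm{End}(\mathbb R^7):\pi^2=\pi,\ \pi^\sharp=\pi,\ \mathrm{tr}\,\pi=3\}$ ($\sharp$ = adjoint w.r.t. $\langle\cdot,\cdot\rangle$), and $\mathfrak M'_S=\{\pi\in\mathrm{Gr}_3(\mathbb R^7):\ \Omega(\pi x,\pi y,(1-\pi)z)=0\ \forall x,y,z\}$,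 equivalently the orthogonal projections onto $3$-dimensional subspaces $V$ with $V\times V\subseteq V$. $T_\pi(\mathrm{Gr}_3(\mathbb R^7))=\{d\in\mathrm{End}(\mathbb R^7): d\pi+\pi d=d,\ d^\sharp=d,\ \mathrm{tr}\,d=0\}$, and $T_\pi(\mathfrak M'_S)=\{d\in T_\pi(\mathrm{Gr}_3(\mathbb R^7)):\ d(x\times y)=d(x)\times y+x\times d(y)\ \forall x,y\in\mathrm{Im}(\pi)\}$. *)

(* R^7 is modelled by column vectors 'cV[R]_7 over a real
   field R, End(R^7) by 'M[R]_7 acting by d x := d *m x. *)
From HB Require Import structures.
From mathcomp Require Import all_boot all_order all_algebra.
Set Implicit Arguments. Unset Strict Implicit. Unset Printing Implicit Defensive.
Import Order.TTheory GRing.Theory Num.Theory.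
Local Open Scope ring_scope.

Section G2.
Variable R : realFieldType.

Definition sh (i : 'I_7) (k : nat) : 'I_7 := inord ((i + k) %% 7).

Definition ev (a : 'I_7) : 'cV[R]_7 := delta_mx a 0.

(* e_a x e_b, from e_i x e_{i+1} = e_{i+3}, e_{i+1} x e_{i+3} = e_i,
   e_{i+3} x e_i = e_{i+1} and anticommutativity *)
Definition cross_basis (a b : 'I_7) : 'cV[R]_7 :=
  \sum_(i < 7)
    ( ((a == i) && (b == sh i 1))%:R *: ev (sh i 3)
    + ((a == sh i 1) && (b == sh i 3))%:R *: ev i
    + ((a == sh i 3) && (b == i))%:R *: ev (sh i 1)
    - ((b == i) && (a == sh i 1))%:R *: ev (sh i 3)
    - ((b == sh i 1) && (a == sh i 3))%:R *: ev i
    - ((b == sh i 3) && (a == i))%:R *: ev (sh i 1)).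

Definition cross (x y : 'cV[R]_7) : 'cV[R]_7 :=
  \sum_(a < 7) \sum_(b < 7) (x a 0 * y b 0) *: cross_basis a b.

Definition innp (x y : 'cV[R]_7) : R := \sum_(a < 7) x a 0 * y a 0.

Definition Omega (x y z : 'cV[R]_7) : R := innp (cross x y) z.

(* adjoint w.r.t. the standard inner product is the transpose *)
Definition inGr3 (pi : 'M[R]_7) : Prop :=
  pi *m pi = pi /\ pi^T = pi /\ \tr pi = 3%:R.

Definition inMS' (pi : 'M[R]_7) : Prop :=
  inGr3 pi /\
  forall x y z : 'cV[R]_7, Omega (pi *m x) (pi *m y) ((1%:M - pi) *m z) = 0.

Definition inIm (pi : 'M[R]_7) (x : 'cV[R]_7) : Prop :=
  exists y : 'cV[R]_7, x = pi *m y.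

Definition inTGr (pi d : 'M[R]_7) : Prop :=
  d *m pi + pi *m d = d /\ d^T = d /\ \tr d = 0.

Definition inTMS' (pi d : 'M[R]_7) : Prop :=
  inTGr pi d /\
  forall x y : 'cV[R]_7, inIm pi x -> inIm pi y ->
    d *m cross x y = cross (d *m x) y + cross x (d *m y).

Definition brk (d1 d2 : 'M[R]_7) : 'M[R]_7 := d1 *m d2 - d2 *m d1.

End G2.

(* Work in the orthonormal frame i, j, k = i x j, l, i x l, j x l, k x l,
   where V0 = span(i, j, k).  An element d of the tangent space to the
   Grassmannian is symmetric and exchanges V0 and V0^perp, hence equals the
   sum over q in {i, j, k} of the symmetrised outer products of d q and q.
   The derivation property forces d k = d i x j + i x d j; conversely, for
   arbitrary d i, d j in V0^perp this choice of d k yields a derivation on V0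
   (a polynomial identity in frame coordinates).  So T_pi(M'_S) is
   parametrised linearly and bijectively by (d i, d j) in (V0^perp)^2, of
   dimension 8, and closure under [[d1, d2], d3] reduces to checking the
   derivation property at (i, j), again in frame coordinates. *)

From HB Require Import structures.
From mathcomp Require Import all_boot all_order all_algebra.
From mathcomp Require Import ring.
Import Order.TTheory GRing.Theory Num.Theory.
Local Open Scope ring_scope.
Set Implicit Arguments. Unset Strict Implicit.

Section Coordinates.
Variable R : realFieldType.
Implicit Types x y : 'cV[R]_7.

Lemma sum_ord_iota (V : zmodType) n (F : 'I_n.+1 -> V) :
  \sum_(a < n.+1) F a = \sum_(m <- iota 0 n.+1) F (inord m).
Proof.
rewrite (_ : iota 0 n.+1 = index_iota 0 n.+1) ?big_mkord; last by rewrite /index_iota subn0.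
by apply: eq_bigr => a _; rewrite inord_val.
Qed.

Lemma inord7_eq (m n : nat) : (m < 7)%N -> (n < 7)%N ->
  ((inord m : 'I_7) == inord n) = (m == n).
Proof. by move=> hm hn; rewrite -val_eqE /= !inordK. Qed.

Lemma colP_inord7 (u w : 'cV[R]_7) :
  (forall n, (n < 7)%N -> u (inord n) 0 = w (inord n) 0) -> u = w.
Proof.
move=> H; apply/matrixP => a b; rewrite ord1.
by have := H a (ltn_ord a); rewrite inord_val.
Qed.

Lemma innpE x y : innp x y =
  x (inord 0) 0 * y (inord 0) 0 + x (inord 1) 0 * y (inord 1) 0
  + x (inord 2) 0 * y (inord 2) 0 + x (inord 3) 0 * y (inord 3) 0
  + x (inord 4) 0 * y (inord 4) 0 + x (inord 5) 0 * y (inord 5) 0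
  + x (inord 6) 0 * y (inord 6) 0.
Proof. by rewrite /innp sum_ord_iota /= !big_cons big_nil addr0 !addrA. Qed.

End Coordinates.

Section InnerProduct.
Variable R : realFieldType.
Implicit Types (x y z : 'cV[R]_7) (A B : 'M[R]_7).

Lemma innpC x y : innp x y = innp y x.
Proof. by apply: eq_bigr => a _; rewrite mulrC. Qed.
Lemma innpDl x y z : innp (x + y) z = innp x z + innp y z.
Proof. rewrite !innpE !mxE; ring. Qed.
Lemma innpDr x y z : innp x (y + z) = innp x y + innp x z.
Proof. rewrite !innpE !mxE; ring. Qed.
Lemma innpZl (a : R) x y : innp (a *: x) y = a * innp x y.
Proof. rewrite !innpE !mxE; ring. Qed.
Lemma innpZr (a : R) x y : innp x (a *: y) = a * innp x y.
Proof. rewrite !innpE !mxE; ring. Qed.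
Lemma innpNl x y : innp (- x) y = - innp x y.
Proof. rewrite !innpE !mxE; ring. Qed.
Lemma innp0l x : innp 0 x = 0.
Proof. rewrite !innpE !mxE; ring. Qed.
Lemma innp0r x : innp x 0 = 0.
Proof. rewrite !innpE !mxE; ring. Qed.

Lemma innp_mx x y : innp x y = (x^T *m y) 0 0.
Proof. by rewrite mxE; apply: eq_bigr => a _; rewrite mxE. Qed.

Lemma innp_mulmxl A x y : innp (A *m x) y = innp x (A^T *m y).
Proof. by rewrite !innp_mx trmx_mul mulmxA. Qed.

Lemma innp_eq0 x : innp x x = 0 -> x = 0.
Proof.
move=> /eqP; rewrite psumr_eq0 => [/allP hx|a _]; last by rewrite -expr2 sqr_ge0.
apply/matrixP => a b; rewrite ord1 mxE.
have /implyP/(_ isT) := hx a (mem_index_enum a).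
by rewrite mulf_eq0 orbb => /eqP.
Qed.

Lemma mulmxP A B : (forall x, A *m x = B *m x) -> A = B.
Proof.
move=> H; apply/matrixP => a b.
have := H (delta_mx b 0); rewrite -!colE => /matrixP /(_ a 0).
by rewrite !mxE.
Qed.

Lemma mul_outer x y z : (x *m y^T) *m z = innp y z *: x.
Proof.
rewrite -mulmxA; have -> : y^T *m z = (innp y z)%:M.
  by apply/matrixP => a b; rewrite !ord1 innp_mx !mxE eqxx mulr1n.
by rewrite mul_mx_scalar.
Qed.

Lemma tr_outer x y : \tr (x *m y^T) = innp y x.
Proof.
rewrite /mxtrace /innp; apply: eq_bigr => a _.
by rewrite mxE big_ord1 mxE mulrC.
Qed.

Lemma trmxD m n (A B : 'M[R]_(m, n)) : (A + B)^T = A^T + B^T.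
Proof. by apply/matrixP => r s; rewrite !mxE. Qed.

Lemma trmxZ m n (a : R) (A : 'M[R]_(m, n)) : (a *: A)^T = a *: A^T.
Proof. by apply/matrixP => r s; rewrite !mxE. Qed.

Definition sym_outer x y : 'M[R]_7 := x *m y^T + y *m x^T.

Lemma trmx_sym_outer x y : (sym_outer x y)^T = sym_outer x y.
Proof. by rewrite /sym_outer trmxD !trmx_mul !trmxK addrC. Qed.

Lemma tr_sym_outer x y : \tr (sym_outer x y) = innp y x + innp x y.
Proof. by rewrite /sym_outer mxtraceD !tr_outer. Qed.

Lemma sym_outer0 y : sym_outer 0 y = 0.
Proof. by rewrite /sym_outer mul0mx linear0 mulmx0 addr0. Qed.

Lemma sym_outerD x1 x2 y : sym_outer (x1 + x2) y = sym_outer x1 y + sym_outer x2 y.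
Proof. by rewrite /sym_outer mulmxDl trmxD mulmxDr addrACA. Qed.

Lemma sym_outerZ (a : R) x y : sym_outer (a *: x) y = a *: sym_outer x y.
Proof. by rewrite /sym_outer trmxZ -scalemxAl -scalemxAr scalerDr. Qed.

End InnerProduct.

Section AssociativeProjection.
Variable R : realFieldType.
Variable pi : 'M[R]_7.
Hypothesis pi_MS : inMS' pi.

Lemma inIm_fixed x : inIm pi x -> pi *m x = x.
Proof. by case: pi_MS => [[idem _] _] [y ->]; rewrite mulmxA idem. Qed.

Lemma ker_pi_orthogonal u : (forall y, innp u (pi *m y) = 0) -> pi *m u = 0.
Proof.
case: pi_MS => [[idem [sym _]] _] H.
by apply: innp_eq0; rewrite innp_mulmxl sym mulmxA idem H.
Qed.

Lemma im_pi_cross x y : pi *m x = x -> pi *m y = y -> pi *m cross x y = cross x y.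
Proof.
case: pi_MS => [[_ [sym _]] HO] px py; set w := cross x y.
have w_perp z : innp w ((1%:M - pi) *m z) = 0 by have := HO x y z; rewrite px py.
have := w_perp ((1%:M - pi) *m w).
rewrite innpC innp_mulmxl linearB /= trmx1 sym => /innp_eq0.
by rewrite mulmxBl mul1mx => /eqP; rewrite subr_eq0 => /eqP.
Qed.

End AssociativeProjection.

Section CrossProduct.
Variable R : realFieldType.
Implicit Types x y z : 'cV[R]_7.

Lemma shE n k : (n < 7)%N -> sh (inord n) k = inord ((n + k) %% 7).
Proof. by move=> hn; rewrite /sh inordK. Qed.

Lemma sum2_pick (I : finType) (V : lmodType R) (f : I -> I -> R) (p q : I) (v : V) :
  \sum_a \sum_b f a b *: (((a == p) && (b == q))%:R *: v) = f p q *: v.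
Proof.
rewrite (bigD1 p) //= [\sum_(a | a != p) _]big1 ?addr0; last first.
  move=> a hap; rewrite big1 // => b _.
  by rewrite (negbTE hap) /= scale0r scaler0.
rewrite (bigD1 q) //= [\sum_(b | b != q) _]big1 ?addr0; last first.
  by move=> b hbq; rewrite (negbTE hbq) andbF scale0r scaler0.
by rewrite !eqxx scale1r.
Qed.

Lemma sum2_pickC (I : finType) (V : lmodType R) (f : I -> I -> R) (p q : I) (v : V) :
  \sum_a \sum_b f a b *: (((b == q) && (a == p))%:R *: v) = f p q *: v.
Proof.
rewrite -(sum2_pick f p q v); apply: eq_bigr => a _; apply: eq_bigr => b _.
by rewrite andbC.
Qed.

Lemma sum2D (I J : finType) (V : zmodType) (F G : I -> J -> V) :
  \sum_a \sum_b (F a b + G a b) = \sum_a \sum_b F a b + \sum_a \sum_b G a b.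
Proof. by rewrite -big_split; apply: eq_bigr => a _; rewrite big_split. Qed.

Lemma sum2N (I J : finType) (V : zmodType) (F : I -> J -> V) :
  \sum_a \sum_b - F a b = - \sum_a \sum_b F a b.
Proof. by rewrite -sumrN; apply: eq_bigr => a _; rewrite sumrN. Qed.

(* Collects, for each line (i, i+1, i+3) of the Fano plane, the three
   products it contributes. *)
Lemma cross_lines x y : cross x y = \sum_(i < 7)
  ( (x i 0 * y (sh i 1) 0 - x (sh i 1) 0 * y i 0) *: ev R (sh i 3)
  + (x (sh i 1) 0 * y (sh i 3) 0 - x (sh i 3) 0 * y (sh i 1) 0) *: ev R i
  + (x (sh i 3) 0 * y i 0 - x i 0 * y (sh i 3) 0) *: ev R (sh i 1)).
Proof.
rewrite /cross /cross_basis.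
under eq_bigr => a _ do under eq_bigr => b _ do rewrite scaler_sumr.
under eq_bigr => a _ do rewrite exchange_big.
rewrite exchange_big; apply: eq_bigr => i _.
under eq_bigr => a _ do under eq_bigr => b _ do rewrite !scalerDr !scalerN.
rewrite !sum2D !sum2N !sum2_pick !sum2_pickC.
by apply/matrixP => r c; rewrite !mxE; ring.
Qed.

Definition cross_coord (X Y : nat -> R) (n : nat) : R :=
  match n with
  | 0 => X 1%N * Y 3%N + X 2%N * Y 6%N + X 4%N * Y 5%N - X 3%N * Y 1%N - X 6%N * Y 2%N - X 5%N * Y 4%N
  | 1 => X 2%N * Y 4%N + X 3%N * Y 0%N + X 5%N * Y 6%N - X 4%N * Y 2%N - X 0%N * Y 3%N - X 6%N * Y 5%N
  | 2 => X 3%N * Y 5%N + X 4%N * Y 1%N + X 6%N * Y 0%N - X 5%N * Y 3%N - X 1%N * Y 4%N - X 0%N * Y 6%N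
  | 3 => X 0%N * Y 1%N + X 4%N * Y 6%N + X 5%N * Y 2%N - X 1%N * Y 0%N - X 6%N * Y 4%N - X 2%N * Y 5%N
  | 4 => X 1%N * Y 2%N + X 5%N * Y 0%N + X 6%N * Y 3%N - X 2%N * Y 1%N - X 0%N * Y 5%N - X 3%N * Y 6%N
  | 5 => X 0%N * Y 4%N + X 2%N * Y 3%N + X 6%N * Y 1%N - X 4%N * Y 0%N - X 3%N * Y 2%N - X 1%N * Y 6%N
  | _ => X 0%N * Y 2%N + X 1%N * Y 5%N + X 3%N * Y 4%N - X 2%N * Y 0%N - X 5%N * Y 1%N - X 4%N * Y 3%N
  end.

Lemma cross_coordE x y n : (n < 7)%N ->
  cross x y (inord n) 0 =
  cross_coord (fun m => x (inord m) 0) (fun m => y (inord m) 0) n.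
Proof.
move=> hn; rewrite cross_lines summxE sum_ord_iota /= !big_cons big_nil !shE //= /ev !mxE.
rewrite !inord7_eq //=.
by case: n hn => [|[|[|[|[|[|[|n]]]]]]] //= _; ring.
Qed.

Ltac coord7 := let n := fresh "n" in let hn := fresh "hn" in
  apply: colP_inord7 => n hn; case: n hn => [|[|[|[|[|[|[|n]]]]]]] //= _;
  rewrite ?innpE; repeat (rewrite ?mxE cross_coordE //=); rewrite ?mxE ?innpE.

Lemma crossC x y : cross x y = - cross y x.
Proof. coord7; ring. Qed.
Lemma crossvv x : cross x x = 0.
Proof. coord7; ring. Qed.
Lemma crossDl x y z : cross (x + y) z = cross x z + cross y z.
Proof. coord7; ring. Qed.
Lemma crossDr x y z : cross x (y + z) = cross x y + cross x z.
Proof. coord7; ring. Qed.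
Lemma crossZl (a : R) x y : cross (a *: x) y = a *: cross x y.
Proof. coord7; ring. Qed.
Lemma crossZr (a : R) x y : cross x (a *: y) = a *: cross x y.
Proof. coord7; ring. Qed.
Lemma cross0l x : cross 0 x = 0.
Proof. coord7; ring. Qed.
Lemma crossNl x y : cross (- x) y = - cross x y.
Proof. coord7; ring. Qed.
Lemma crossNr x y : cross x (- y) = - cross x y.
Proof. coord7; ring. Qed.

Lemma innp_cross_cycle x y z : innp (cross x y) z = innp (cross y z) x.
Proof. rewrite !innpE; repeat (rewrite cross_coordE //=); ring. Qed.
Lemma innp_cross2 x y z :
  innp (cross x y) (cross z y) = innp x z * innp y y - innp x y * innp z y.
Proof. rewrite !innpE; repeat (rewrite cross_coordE //=); ring. Qed.
Lemma cross_crossvv x y : cross x (cross x y) = innp x y *: x - innp x x *: y.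
Proof. coord7; ring. Qed.
Lemma cross_cross x y z : cross x (cross y z) =
  - cross (cross x y) z + (2 * innp x z) *: y - innp y z *: x - innp x y *: z.
Proof. coord7; ring. Qed.

End CrossProduct.

Section GrassmannTriple.
Variable R : realFieldType.
Variable pi : 'M[R]_7.
Implicit Types A B C : 'M[R]_7.

Lemma brk_brk_mulmx A B C (x : 'cV[R]_7) :
  brk (brk A B) C *m x = A *m (B *m (C *m x)) - B *m (A *m (C *m x))
    - (C *m (A *m (B *m x)) - C *m (B *m (A *m x))).
Proof. by rewrite /brk !mulmxBl !mulmxBr !mulmxBl -!mulmxA. Qed.

Lemma anticomm_mulr A : A *m pi + pi *m A = A -> A *m pi = A - pi *m A.
Proof. by move=> h; rewrite -{2}h addrK. Qed.

Lemma anticomm_mul_comm A B : A *m pi + pi *m A = A -> B *m pi + pi *m B = B ->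
  (A *m B) *m pi = pi *m (A *m B).
Proof.
move=> hA hB.
rewrite -mulmxA (anticomm_mulr hB) mulmxBr (mulmxA A pi B) (anticomm_mulr hA).
by rewrite mulmxBl opprB addrC subrK mulmxA.
Qed.

Lemma TGr_triple A B C : inTGr pi A -> inTGr pi B -> inTGr pi C ->
  inTGr pi (brk (brk A B) C).
Proof.
move=> [hA [sA _]] [hB [sB _]] [hC [sC _]].
have hT : brk A B *m pi = pi *m brk A B.
  by rewrite /brk mulmxBl mulmxBr (anticomm_mul_comm hA hB) (anticomm_mul_comm hB hA).
have sT : (brk A B)^T = - brk A B.
  by rewrite /brk linearB /= !trmx_mul sA sB opprB.
move: (brk A B) hT sT => T hT sT.
split; last split.
- rewrite /brk mulmxBl mulmxBr -!mulmxA (anticomm_mulr hC) hT mulmxBr !mulmxA.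
  rewrite hT (anticomm_mulr hC) mulmxBl.
  by apply/matrixP => a b; rewrite !mxE; ring.
- rewrite /brk linearB /= !trmx_mul sT sC mulmxN mulNmx.
  by apply/matrixP => a b; rewrite !mxE; ring.
- by rewrite /brk linearB /= mxtrace_mulC subrr.
Qed.

End GrassmannTriple.

Section QuaternionFrame.
Variable R : realFieldType.
Variables i j l : 'cV[R]_7.
Implicit Types x y : 'cV[R]_7.
Hypothesis ii1 : innp i i = 1.
Hypothesis jj1 : innp j j = 1.
Hypothesis ij0 : innp i j = 0.
Hypothesis ll1 : innp l l = 1.
Hypothesis li0 : innp l i = 0.
Hypothesis lj0 : innp l j = 0.
Hypothesis lk0 : innp l (cross i j) = 0.

Local Notation k := (cross i j).

Lemma cross_ji : cross j i = - k. Proof. by rewrite crossC. Qed.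
Lemma cross_ik : cross i k = - j.
Proof. by rewrite cross_crossvv ij0 ii1 scale0r scale1r sub0r. Qed.
Lemma cross_ki : cross k i = j. Proof. by rewrite crossC cross_ik opprK. Qed.
Lemma cross_jk : cross j k = i.
Proof.
by rewrite -[k]opprK -cross_ji crossNr cross_crossvv innpC ij0 jj1 scale0r scale1r sub0r opprK.
Qed.
Lemma cross_kj : cross k j = - i. Proof. by rewrite crossC cross_jk. Qed.

Lemma kk1 : innp k k = 1.
Proof. by rewrite innp_cross2 ii1 jj1 ij0 mulr0 mulr1 subr0. Qed.
Lemma ki0 : innp k i = 0.
Proof. by rewrite innp_cross_cycle innp_cross_cycle crossvv innp0l. Qed.
Lemma kj0 : innp k j = 0.
Proof. by rewrite innp_cross_cycle crossvv innp0l. Qed.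

Lemma innp_crossl x y : innp (cross y l) x = innp (cross x y) l.
Proof. by rewrite 2!innp_cross_cycle. Qed.
Lemma innp_crossr x y : innp x (cross y l) = innp (cross x y) l.
Proof. by rewrite innpC innp_crossl. Qed.
Lemma innp_cross_ll x : innp (cross l x) l = 0.
Proof. by rewrite 2!innp_cross_cycle crossvv innp0l. Qed.

Lemma cross_quat_l a b : innp a l = 0 -> innp b l = 0 ->
  cross a (cross b l) = - cross (cross a b) l - innp a b *: l.
Proof.
move=> al bl; rewrite cross_cross (innpC a l) (innpC b l) in al bl *.
by rewrite al bl mulr0 !scale0r subr0 addr0.
Qed.

Local Notation quat_crossE := (crossvv, cross_ji, cross_ik, cross_ki,
  cross_jk, cross_kj, crossNl, crossNr, cross0l, opprK, oppr0, scale0r, scale1r, subr0, sub0r).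

Lemma il0 : innp i l = 0. Proof. by rewrite innpC. Qed.
Lemma jl0 : innp j l = 0. Proof. by rewrite innpC. Qed.
Lemma kl0 : innp k l = 0. Proof. by rewrite innpC. Qed.

Lemma cross_i_il : cross i (cross i l) = - l.
Proof. by rewrite cross_quat_l ?il0 // ii1 ?quat_crossE. Qed.
Lemma cross_i_jl : cross i (cross j l) = - cross k l.
Proof. by rewrite cross_quat_l ?il0 ?jl0 // ij0 ?quat_crossE. Qed.
Lemma cross_i_kl : cross i (cross k l) = cross j l.
Proof. by rewrite cross_quat_l ?il0 ?kl0 // innpC ki0 ?quat_crossE. Qed.
Lemma cross_j_il : cross j (cross i l) = cross k l.
Proof. by rewrite cross_quat_l ?il0 ?jl0 // innpC ij0 ?quat_crossE. Qed.
Lemma cross_j_jl : cross j (cross j l) = - l.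
Proof. by rewrite cross_quat_l ?jl0 // jj1 ?quat_crossE. Qed.
Lemma cross_j_kl : cross j (cross k l) = - cross i l.
Proof. by rewrite cross_quat_l ?jl0 ?kl0 // innpC kj0 ?quat_crossE. Qed.
Lemma cross_k_il : cross k (cross i l) = - cross j l.
Proof. by rewrite cross_quat_l ?il0 ?kl0 // ki0 ?quat_crossE. Qed.
Lemma cross_k_jl : cross k (cross j l) = cross i l.
Proof. by rewrite cross_quat_l ?jl0 ?kl0 // kj0 ?quat_crossE. Qed.
Lemma cross_k_kl : cross k (cross k l) = - l.
Proof. by rewrite cross_quat_l ?kl0 // kk1 ?quat_crossE. Qed.

(* Locked so that failed matches against it during rewriting stay cheap. *)
Fact frame_comb_key : unit. Proof. by []. Qed.
Definition frame_comb (c0 c1 c2 c3 c4 c5 c6 : R) : 'cV[R]_7 :=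
  locked_with frame_comb_key (c0 *: i + c1 *: j + c2 *: k + c3 *: l
  + c4 *: cross i l + c5 *: cross j l + c6 *: cross k l).

Lemma frame_combE c0 c1 c2 c3 c4 c5 c6 : frame_comb c0 c1 c2 c3 c4 c5 c6 =
  c0 *: i + c1 *: j + c2 *: k + c3 *: l
  + c4 *: cross i l + c5 *: cross j l + c6 *: cross k l.
Proof. by rewrite /frame_comb unlock. Qed.

Lemma innp_frame_comb c0 c1 c2 c3 c4 c5 c6 e0 e1 e2 e3 e4 e5 e6 :
  innp (frame_comb c0 c1 c2 c3 c4 c5 c6) (frame_comb e0 e1 e2 e3 e4 e5 e6) =
  c0 * e0 + c1 * e1 + c2 * e2 + c3 * e3 + c4 * e4 + c5 * e5 + c6 * e6.
Proof.
rewrite !frame_combE !innpDl !innpDr !innpZl !innpZr.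
rewrite !innp_cross2 !innp_crossl !innp_crossr !innp_cross_ll.
rewrite ?quat_crossE ?innpNl ?innp0l.
rewrite ?(ii1, jj1, kk1, ij0, ki0, kj0, innpC j i, innpC i k, innpC j k,
  ll1, li0, lj0, lk0, il0, jl0, kl0).
ring.
Qed.

Ltac frame_ring := let n := fresh "n" in
  apply: colP_inord7 => n _; rewrite ?frame_combE !mxE; ring.

Lemma frame_comb_i : frame_comb 1 0 0 0 0 0 0 = i. Proof. frame_ring. Qed.
Lemma frame_comb_j : frame_comb 0 1 0 0 0 0 0 = j. Proof. frame_ring. Qed.
Lemma frame_comb_k : frame_comb 0 0 1 0 0 0 0 = k. Proof. frame_ring. Qed.
Lemma frame_comb_l : frame_comb 0 0 0 1 0 0 0 = l. Proof. frame_ring. Qed.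
Lemma frame_comb_il : frame_comb 0 0 0 0 1 0 0 = cross i l. Proof. frame_ring. Qed.
Lemma frame_comb_jl : frame_comb 0 0 0 0 0 1 0 = cross j l. Proof. frame_ring. Qed.
Lemma frame_comb_kl : frame_comb 0 0 0 0 0 0 1 = cross k l. Proof. frame_ring. Qed.

Definition frame_mx : 'M[R]_7 := \matrix_(a, m)
  frame_comb (m == 0 :> nat)%:R (m == 1 :> nat)%:R (m == 2 :> nat)%:R
    (m == 3 :> nat)%:R (m == 4 :> nat)%:R (m == 5 :> nat)%:R (m == 6 :> nat)%:R a 0.

Lemma col_frame_mx (m : 'I_7) : col m frame_mx = frame_comb (m == 0 :> nat)%:R
  (m == 1 :> nat)%:R (m == 2 :> nat)%:R (m == 3 :> nat)%:R
  (m == 4 :> nat)%:R (m == 5 :> nat)%:R (m == 6 :> nat)%:R.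
Proof. by apply/matrixP => a b; rewrite ord1 !mxE. Qed.

Lemma frame_mx_orthogonal : frame_mx^T *m frame_mx = 1%:M.
Proof.
apply/matrixP => m n.
have -> : (frame_mx^T *m frame_mx) m n = innp (col m frame_mx) (col n frame_mx).
  by rewrite mxE; apply: eq_bigr => a _; rewrite !mxE.
rewrite !col_frame_mx innp_frame_comb !mxE -val_eqE.
by case: m => [[|[|[|[|[|[|[|m]]]]]]] //= _];
   case: n => [[|[|[|[|[|[|[|n]]]]]]] //= _]; ring.
Qed.

(* An orthonormal family of seven vectors is a basis of R^7. *)
Lemma frame_expansion x : x = frame_comb (innp i x) (innp j x) (innp k x)
  (innp l x) (innp (cross i l) x) (innp (cross j l) x) (innp (cross k l) x).
Proof.
have frame_coord (m : 'I_7) : (frame_mx^T *m x) m 0 = innp (col m frame_mx) x.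
  by rewrite mxE; apply: eq_bigr => a _; rewrite !mxE.
rewrite -{1}(mul1mx x) -(mulmx1C frame_mx_orthogonal) -mulmxA.
apply/matrixP => a b; rewrite ord1 mxE sum_ord_iota /= !big_cons big_nil.
have frame_entry (m : 'I_7) : frame_mx a m = col m frame_mx a 0 by rewrite !mxE.
rewrite !frame_coord !frame_entry !col_frame_mx !inordK //=.
rewrite frame_comb_i frame_comb_j frame_comb_k frame_comb_l frame_comb_il
  frame_comb_jl frame_comb_kl !frame_combE !mxE.
ring.
Qed.

Lemma frame_comb_congr c0 c1 c2 c3 c4 c5 c6 e0 e1 e2 e3 e4 e5 e6 :
  c0 = e0 -> c1 = e1 -> c2 = e2 -> c3 = e3 -> c4 = e4 -> c5 = e5 -> c6 = e6 ->
  frame_comb c0 c1 c2 c3 c4 c5 c6 = frame_comb e0 e1 e2 e3 e4 e5 e6.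
Proof. by move=> -> -> -> -> -> -> ->. Qed.

Lemma frame_combD c0 c1 c2 c3 c4 c5 c6 e0 e1 e2 e3 e4 e5 e6 :
  frame_comb c0 c1 c2 c3 c4 c5 c6 + frame_comb e0 e1 e2 e3 e4 e5 e6 =
  frame_comb (c0 + e0) (c1 + e1) (c2 + e2) (c3 + e3) (c4 + e4) (c5 + e5) (c6 + e6).
Proof. frame_ring. Qed.
Lemma frame_combZ a c0 c1 c2 c3 c4 c5 c6 :
  a *: frame_comb c0 c1 c2 c3 c4 c5 c6 =
  frame_comb (a * c0) (a * c1) (a * c2) (a * c3) (a * c4) (a * c5) (a * c6).
Proof. frame_ring. Qed.
Lemma frame_combN c0 c1 c2 c3 c4 c5 c6 :
  - frame_comb c0 c1 c2 c3 c4 c5 c6 =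
  frame_comb (- c0) (- c1) (- c2) (- c3) (- c4) (- c5) (- c6).
Proof. frame_ring. Qed.

Lemma frame_combB c0 c1 c2 c3 c4 c5 c6 e0 e1 e2 e3 e4 e5 e6 :
  frame_comb c0 c1 c2 c3 c4 c5 c6 - frame_comb e0 e1 e2 e3 e4 e5 e6 =
  frame_comb (c0 - e0) (c1 - e1) (c2 - e2) (c3 - e3) (c4 - e4) (c5 - e5) (c6 - e6).
Proof. frame_ring. Qed.

Lemma cross_frame_comb p0 p1 p2 q0 q1 q2 q3 q4 q5 q6 :
  cross (frame_comb p0 p1 p2 0 0 0 0) (frame_comb q0 q1 q2 q3 q4 q5 q6) =
  frame_comb (p1 * q2 - p2 * q1) (p2 * q0 - p0 * q2) (p0 * q1 - p1 * q0)
    (- p0 * q4 - p1 * q5 - p2 * q6) (p0 * q3 - p1 * q6 + p2 * q5)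
    (p0 * q6 + p1 * q3 - p2 * q4) (- p0 * q5 + p1 * q4 + p2 * q3).
Proof.
rewrite !frame_combE !crossDl !crossDr !crossZl !crossZr.
rewrite ?(crossvv, cross_ji, cross_ik, cross_ki, cross_jk, cross_kj).
rewrite cross_i_il cross_i_jl cross_i_kl cross_j_il cross_j_jl cross_j_kl
  cross_k_il cross_k_jl cross_k_kl.
frame_ring.
Qed.

Lemma cross_frame_combC p0 p1 p2 q0 q1 q2 q3 q4 q5 q6 :
  cross (frame_comb q0 q1 q2 q3 q4 q5 q6) (frame_comb p0 p1 p2 0 0 0 0) =
  frame_comb (p2 * q1 - p1 * q2) (p0 * q2 - p2 * q0) (p1 * q0 - p0 * q1)
    (p0 * q4 + p1 * q5 + p2 * q6) (p1 * q6 - p0 * q3 - p2 * q5)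
    (p2 * q4 - p0 * q6 - p1 * q3) (p0 * q5 - p1 * q4 - p2 * q3).
Proof. by rewrite crossC cross_frame_comb frame_combN; apply: frame_comb_congr; ring. Qed.

Lemma innp_i_frame_comb c0 c1 c2 c3 c4 c5 c6 : innp i (frame_comb c0 c1 c2 c3 c4 c5 c6) = c0.
Proof. rewrite -{1}frame_comb_i innp_frame_comb; ring. Qed.
Lemma innp_j_frame_comb c0 c1 c2 c3 c4 c5 c6 : innp j (frame_comb c0 c1 c2 c3 c4 c5 c6) = c1.
Proof. rewrite -{1}frame_comb_j innp_frame_comb; ring. Qed.
Lemma innp_k_frame_comb c0 c1 c2 c3 c4 c5 c6 : innp k (frame_comb c0 c1 c2 c3 c4 c5 c6) = c2.
Proof. rewrite -{1}frame_comb_k innp_frame_comb; ring. Qed.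
Lemma innp_l_frame_comb c0 c1 c2 c3 c4 c5 c6 : innp l (frame_comb c0 c1 c2 c3 c4 c5 c6) = c3.
Proof. rewrite -{1}frame_comb_l innp_frame_comb; ring. Qed.
Lemma innp_il_frame_comb c0 c1 c2 c3 c4 c5 c6 :
  innp (cross i l) (frame_comb c0 c1 c2 c3 c4 c5 c6) = c4.
Proof. rewrite -{1}frame_comb_il innp_frame_comb; ring. Qed.
Lemma innp_jl_frame_comb c0 c1 c2 c3 c4 c5 c6 :
  innp (cross j l) (frame_comb c0 c1 c2 c3 c4 c5 c6) = c5.
Proof. rewrite -{1}frame_comb_jl innp_frame_comb; ring. Qed.
Lemma innp_kl_frame_comb c0 c1 c2 c3 c4 c5 c6 :
  innp (cross k l) (frame_comb c0 c1 c2 c3 c4 c5 c6) = c6.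
Proof. rewrite -{1}frame_comb_kl innp_frame_comb; ring. Qed.

(* The derivation property at (i, j) forces d k = d i x j + i x d j. *)
Definition tangent_mx (u w : 'cV[R]_7) : 'M[R]_7 :=
  sym_outer u i + sym_outer w j + sym_outer (cross u j + cross i w) k.

Lemma tangent_mx0 : tangent_mx 0 0 = 0.
Proof. by rewrite /tangent_mx cross0l crossC cross0l oppr0 addr0 !sym_outer0 !addr0. Qed.

Lemma tangent_mxD u1 u2 w1 w2 :
  tangent_mx (u1 + u2) (w1 + w2) = tangent_mx u1 w1 + tangent_mx u2 w2.
Proof.
rewrite /tangent_mx crossDl crossDr [cross u1 j + _ + _]addrACA.
rewrite (sym_outerD u1) (sym_outerD w1) (sym_outerD (cross u1 j + cross i w1)).
by rewrite (addrACA (sym_outer u1 i)) (addrACA (sym_outer u1 i + sym_outer w1 j)).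
Qed.

Lemma tangent_mxZ (a : R) u w : tangent_mx (a *: u) (a *: w) = a *: tangent_mx u w.
Proof. by rewrite /tangent_mx crossZl crossZr -scalerDr !sym_outerZ !scalerDr. Qed.

Lemma tangent_mx_sum n (c : 'I_n -> R) (U W : 'I_n -> 'cV[R]_7) :
  tangent_mx (\sum_m c m *: U m) (\sum_m c m *: W m) =
  \sum_m c m *: tangent_mx (U m) (W m).
Proof.
apply: (big_rec3 (fun u w D => tangent_mx u w = D)) => [|m u w D _ <-].
  exact: tangent_mx0.
by rewrite tangent_mxD tangent_mxZ.
Qed.

Lemma cross_perp_ij a0 a1 a2 a3 b0 b1 b2 b3 :
  cross (frame_comb 0 0 0 a0 a1 a2 a3) j + cross i (frame_comb 0 0 0 b0 b1 b2 b3) =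
  frame_comb 0 0 0 (a2 - b1) (a3 + b0) (b3 - a0) (- (a1 + b2)).
Proof.
rewrite -[j]frame_comb_j -[i]frame_comb_i.
rewrite cross_frame_combC cross_frame_comb frame_combD.
by apply: frame_comb_congr; ring.
Qed.

Definition tangent_act (a0 a1 a2 a3 b0 b1 b2 b3 c0 c1 c2 c3 c4 c5 c6 : R) :=
  frame_comb (a0 * c3 + a1 * c4 + a2 * c5 + a3 * c6)
    (b0 * c3 + b1 * c4 + b2 * c5 + b3 * c6)
    ((a2 - b1) * c3 + (a3 + b0) * c4 + (b3 - a0) * c5 - (a1 + b2) * c6)
    (c0 * a0 + c1 * b0 + c2 * (a2 - b1)) (c0 * a1 + c1 * b1 + c2 * (a3 + b0))
    (c0 * a2 + c1 * b2 + c2 * (b3 - a0)) (c0 * a3 + c1 * b3 - c2 * (a1 + b2)).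

Lemma tangent_mx_frame_comb a0 a1 a2 a3 b0 b1 b2 b3 c0 c1 c2 c3 c4 c5 c6 :
  tangent_mx (frame_comb 0 0 0 a0 a1 a2 a3) (frame_comb 0 0 0 b0 b1 b2 b3)
    *m frame_comb c0 c1 c2 c3 c4 c5 c6 =
  tangent_act a0 a1 a2 a3 b0 b1 b2 b3 c0 c1 c2 c3 c4 c5 c6.
Proof.
rewrite /tangent_act /tangent_mx cross_perp_ij /sym_outer !mulmxDl !mul_outer.
rewrite innp_i_frame_comb innp_j_frame_comb innp_k_frame_comb !innp_frame_comb.
frame_ring.
Qed.

Lemma tangent_mx_i a0 a1 a2 a3 b0 b1 b2 b3 :
  tangent_mx (frame_comb 0 0 0 a0 a1 a2 a3) (frame_comb 0 0 0 b0 b1 b2 b3) *m i =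
  frame_comb 0 0 0 a0 a1 a2 a3.
Proof.
rewrite -{1}frame_comb_i tangent_mx_frame_comb /tangent_act.
by apply: frame_comb_congr; ring.
Qed.

Lemma tangent_mx_j a0 a1 a2 a3 b0 b1 b2 b3 :
  tangent_mx (frame_comb 0 0 0 a0 a1 a2 a3) (frame_comb 0 0 0 b0 b1 b2 b3) *m j =
  frame_comb 0 0 0 b0 b1 b2 b3.
Proof.
rewrite -{1}frame_comb_j tangent_mx_frame_comb /tangent_act.
by apply: frame_comb_congr; ring.
Qed.

Definition tangent_basis (m : 'I_8) : 'M[R]_7 :=
  tangent_mx
    (frame_comb 0 0 0 (m == 0 :> nat)%:R (m == 1 :> nat)%:R (m == 2 :> nat)%:R (m == 3 :> nat)%:R)
    (frame_comb 0 0 0 (m == 4 :> nat)%:R (m == 5 :> nat)%:R (m == 6 :> nat)%:R (m == 7 :> nat)%:R).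

Lemma sum_tangent_basis (c : 'I_8 -> R) :
  \sum_(m < 8) c m *: tangent_basis m =
  tangent_mx (frame_comb 0 0 0 (c (inord 0)) (c (inord 1)) (c (inord 2)) (c (inord 3)))
             (frame_comb 0 0 0 (c (inord 4)) (c (inord 5)) (c (inord 6)) (c (inord 7))).
Proof.
rewrite -tangent_mx_sum !sum_ord_iota /= !big_cons !big_nil !addr0 !inordK //=.
rewrite !frame_combZ !frame_combD.
by congr tangent_mx; apply: frame_comb_congr; ring.
Qed.

Definition tangent_tuple : 8.-tuple 'M[R]_7 := [tuple tangent_basis m | m < 8].

Lemma sum_tangent_tuple (c : 'I_8 -> R) :
  \sum_(m < 8) c m *: tangent_tuple`_m = \sum_(m < 8) c m *: tangent_basis m.
Proof. by apply: eq_bigr => m _; rewrite -tnth_nth tnth_mktuple. Qed.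

Lemma tangent_tuple_free : free tangent_tuple.
Proof.
apply/freeP => c; rewrite sum_tangent_tuple sum_tangent_basis => D0.
have := congr1 (mulmx^~ i) D0; have := congr1 (mulmx^~ j) D0.
rewrite /= tangent_mx_i tangent_mx_j !mul0mx => Dj Di.
have coords v : v = 0 -> [/\ innp l v = 0, innp (cross i l) v = 0,
    innp (cross j l) v = 0 & innp (cross k l) v = 0].
  by move=> ->; rewrite !innp0r.
case: (coords _ Di) (coords _ Dj).
rewrite !innp_l_frame_comb !innp_il_frame_comb !innp_jl_frame_comb !innp_kl_frame_comb.
move=> c0 c1 c2 c3 [c4 c5 c6 c7] m; rewrite -(inord_val m).
by case: m => [[|[|[|[|[|[|[|[|m]]]]]]]] //= _].
Qed.

Lemma tangent_tuple_dim : \dim <<tangent_tuple>>%VS = 8%N.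
Proof. by move: tangent_tuple_free; rewrite /free size_tuple => /eqP. Qed.

Section Tangent.
Variable pi : 'M[R]_7.
Hypothesis pi_MS : inMS' pi.
Hypothesis i_im : inIm pi i.
Hypothesis j_im : inIm pi j.
Hypothesis l_perp : forall v, inIm pi v -> innp l v = 0.

Lemma pi_i : pi *m i = i. Proof. exact: (inIm_fixed pi_MS i_im). Qed.
Lemma pi_j : pi *m j = j. Proof. exact: (inIm_fixed pi_MS j_im). Qed.
Lemma pi_k : pi *m k = k. Proof. exact: (im_pi_cross pi_MS pi_i pi_j). Qed.

Lemma pi_l : pi *m l = 0.
Proof. by apply: (ker_pi_orthogonal pi_MS) => y; apply: l_perp; exists y. Qed.

Lemma pi_cross_l q : pi *m q = q -> pi *m cross q l = 0.
Proof.
move=> pq; apply: (ker_pi_orthogonal pi_MS) => y; rewrite innp_crossl innpC.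
by apply: l_perp; exists (cross (pi *m y) q); rewrite (im_pi_cross pi_MS) // mulmxA pi_MS.1.1.
Qed.

Lemma pi_frame_comb c0 c1 c2 c3 c4 c5 c6 :
  pi *m frame_comb c0 c1 c2 c3 c4 c5 c6 = frame_comb c0 c1 c2 0 0 0 0.
Proof.
rewrite !frame_combE !mulmxDr -!scalemxAr (pi_cross_l pi_i) (pi_cross_l pi_j)
  (pi_cross_l pi_k) pi_i pi_j pi_k pi_l.
frame_ring.
Qed.

Lemma pi_mul_frame y : pi *m y = frame_comb (innp i y) (innp j y) (innp k y) 0 0 0 0.
Proof. by rewrite {1}(frame_expansion y) pi_frame_comb. Qed.

Lemma ker_pi_frame x : pi *m x = 0 -> x =
  frame_comb 0 0 0 (innp l x) (innp (cross i l) x) (innp (cross j l) x) (innp (cross k l) x).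
Proof.
rewrite {1}(frame_expansion x) pi_frame_comb => pix0.
have coord0 q : innp q (frame_comb (innp i x) (innp j x) (innp k x) 0 0 0 0) = 0.
  by rewrite pix0 innp0r.
move: (coord0 i) (coord0 j) (coord0 k).
rewrite innp_i_frame_comb innp_j_frame_comb innp_k_frame_comb => xi xj xk.
by rewrite {1}(frame_expansion x) xi xj xk.
Qed.

Section TangentGr.
Variable d : 'M[R]_7.
Hypothesis d_tan : inTGr pi d.

Lemma TGr_im x : pi *m x = x -> pi *m (d *m x) = 0.
Proof.
case: d_tan => anti _ pix; apply: (@addrI _ (d *m x)).
by rewrite addr0 -{1}pix !mulmxA -mulmxDl anti.
Qed.

Lemma TGr_ker x : pi *m x = 0 -> pi *m (d *m x) = d *m x.
Proof.
by case: d_tan => anti _ pix; rewrite -{2}anti mulmxDl -mulmxA pix mulmx0 add0r mulmxA.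
Qed.

Lemma TGr_sym x y : innp (d *m x) y = innp x (d *m y).
Proof. by case: d_tan => _ [dT _]; rewrite innp_mulmxl dT. Qed.

Lemma TGr_ker_frame v : pi *m v = 0 ->
  d *m v = frame_comb (innp v (d *m i)) (innp v (d *m j)) (innp v (d *m k)) 0 0 0 0.
Proof.
move=> piv; rewrite -{1}(TGr_ker piv) pi_mul_frame.
by rewrite (innpC v (d *m i)) (innpC v (d *m j)) (innpC v (d *m k)) !TGr_sym.
Qed.

(* A symmetric map exchanging Im pi and Ker pi is determined by its values on
   the orthonormal basis i, j, k of Im pi. *)
Lemma TGr_sym_outer :
  d = sym_outer (d *m i) i + sym_outer (d *m j) j + sym_outer (d *m k) k.
Proof.
apply: mulmxP => x; rewrite (frame_expansion x) /sym_outer !mulmxDl !mul_outer.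
rewrite {1}frame_combE !mulmxDr -!scalemxAr (TGr_ker_frame pi_l)
  (TGr_ker_frame (pi_cross_l pi_i)) (TGr_ker_frame (pi_cross_l pi_j))
  (TGr_ker_frame (pi_cross_l pi_k)).
rewrite innp_i_frame_comb innp_j_frame_comb innp_k_frame_comb.
move: (ker_pi_frame (TGr_im pi_i)) (ker_pi_frame (TGr_im pi_j)) (ker_pi_frame (TGr_im pi_k)).
move: (d *m i) (d *m j) (d *m k) => A B C -> -> ->.
rewrite !innp_frame_comb !innp_l_frame_comb !innp_il_frame_comb !innp_jl_frame_comb
  !innp_kl_frame_comb.
frame_ring.
Qed.

End TangentGr.

Section TangentMx.
Variables a0 a1 a2 a3 b0 b1 b2 b3 : R.
Local Notation D := (tangent_mx (frame_comb 0 0 0 a0 a1 a2 a3)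
  (frame_comb 0 0 0 b0 b1 b2 b3)).

Lemma tangent_mx_TGr : inTGr pi D.
Proof.
split; [|split].
- apply: mulmxP => x; rewrite (frame_expansion x) mulmxDl -!mulmxA.
  rewrite pi_frame_comb !tangent_mx_frame_comb /tangent_act pi_frame_comb frame_combD.
  by apply: frame_comb_congr; ring.
- by rewrite /tangent_mx 2!trmxD !trmx_sym_outer.
- rewrite /tangent_mx 2!mxtraceD !tr_sym_outer cross_perp_ij.
  rewrite !(innpC (frame_comb _ _ _ _ _ _ _)).
  by rewrite innp_i_frame_comb innp_j_frame_comb innp_k_frame_comb !addr0.
Qed.

Lemma tangent_mx_TMS : inTMS' pi D.
Proof.
split; first exact: tangent_mx_TGr.
move=> _ _ [x ->] [y ->]; rewrite !pi_mul_frame.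
rewrite cross_frame_comb !tangent_mx_frame_comb /tangent_act.
rewrite cross_frame_comb cross_frame_combC frame_combD.
by apply: frame_comb_congr; ring.
Qed.

End TangentMx.

Section TangentDerivation.
Variable d : 'M[R]_7.
Hypothesis d_tan : inTGr pi d.
Hypothesis d_ij : d *m k = cross (d *m i) j + cross i (d *m j).

Lemma TGr_eq_tangent_mx : d = tangent_mx (d *m i) (d *m j).
Proof. by rewrite {1}(TGr_sym_outer d_tan) d_ij. Qed.

Lemma TGr_TMS : inTMS' pi d.
Proof.
rewrite TGr_eq_tangent_mx (ker_pi_frame (TGr_im d_tan pi_i)).
by rewrite (ker_pi_frame (TGr_im d_tan pi_j)); apply: tangent_mx_TMS.
Qed.

End TangentDerivation.

Lemma TMS_eq_tangent_mx d : inTMS' pi d -> d = tangent_mx (d *m i) (d *m j).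
Proof.
by case=> d_tan d_der; apply: TGr_eq_tangent_mx => //; apply: d_der; [apply: i_im | apply: j_im].
Qed.

(* A, B, C stand for tangent_mx matrices; keeping them abstract keeps the
   rewriting with their actions fast. *)
Section TangentTriple.
Variables A B C : 'M[R]_7.
Variables a0 a1 a2 a3 a4 a5 a6 a7 b0 b1 b2 b3 b4 b5 b6 b7 : R.
Variables e0 e1 e2 e3 e4 e5 e6 e7 : R.
Hypothesis A_act : forall c0 c1 c2 c3 c4 c5 c6,
  A *m frame_comb c0 c1 c2 c3 c4 c5 c6 = tangent_act a0 a1 a2 a3 a4 a5 a6 a7 c0 c1 c2 c3 c4 c5 c6.
Hypothesis B_act : forall c0 c1 c2 c3 c4 c5 c6,
  B *m frame_comb c0 c1 c2 c3 c4 c5 c6 = tangent_act b0 b1 b2 b3 b4 b5 b6 b7 c0 c1 c2 c3 c4 c5 c6.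
Hypothesis C_act : forall c0 c1 c2 c3 c4 c5 c6,
  C *m frame_comb c0 c1 c2 c3 c4 c5 c6 = tangent_act e0 e1 e2 e3 e4 e5 e6 e7 c0 c1 c2 c3 c4 c5 c6.

Lemma brk_brk_derivation (E := brk (brk A B) C) :
  E *m k = cross (E *m i) j + cross i (E *m j).
Proof.
rewrite /E -[k]frame_comb_k -[j]frame_comb_j -[i]frame_comb_i !brk_brk_mulmx.
do 3 rewrite ?A_act ?B_act ?C_act /tangent_act.
rewrite !frame_combB cross_frame_combC cross_frame_comb frame_combD.
by apply: frame_comb_congr; ring.
Qed.

End TangentTriple.

Lemma TMS_frame_comb d : inTMS' pi d -> forall c0 c1 c2 c3 c4 c5 c6,
  d *m frame_comb c0 c1 c2 c3 c4 c5 c6 =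
  tangent_act (innp l (d *m i)) (innp (cross i l) (d *m i))
    (innp (cross j l) (d *m i)) (innp (cross k l) (d *m i))
    (innp l (d *m j)) (innp (cross i l) (d *m j))
    (innp (cross j l) (d *m j)) (innp (cross k l) (d *m j)) c0 c1 c2 c3 c4 c5 c6.
Proof.
move=> hd c0 c1 c2 c3 c4 c5 c6; rewrite {1}(TMS_eq_tangent_mx hd).
rewrite {1}(ker_pi_frame (TGr_im hd.1 pi_i)) {1}(ker_pi_frame (TGr_im hd.1 pi_j)).
exact: tangent_mx_frame_comb.
Qed.

Lemma TMS_triple d1 d2 d3 : inTMS' pi d1 -> inTMS' pi d2 -> inTMS' pi d3 ->
  inTMS' pi (brk (brk d1 d2) d3).
Proof.
move=> h1 h2 h3; apply: TGr_TMS; first exact: TGr_triple h1.1 h2.1 h3.1.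
exact: brk_brk_derivation (TMS_frame_comb h1) (TMS_frame_comb h2) (TMS_frame_comb h3).
Qed.

Lemma tangent_tuple_span d : d \in <<tangent_tuple>>%VS <-> inTMS' pi d.
Proof.
split=> [/coord_span ->|hd].
  by rewrite sum_tangent_tuple sum_tangent_basis; apply: tangent_mx_TMS.
pose c (m : 'I_8) := [:: innp l (d *m i); innp (cross i l) (d *m i);
  innp (cross j l) (d *m i); innp (cross k l) (d *m i); innp l (d *m j);
  innp (cross i l) (d *m j); innp (cross j l) (d *m j); innp (cross k l) (d *m j)]`_m.
have -> : d = \sum_(m < 8) c m *: tangent_tuple`_m.
  rewrite sum_tangent_tuple sum_tangent_basis /c !inordK //= {1}(TMS_eq_tangent_mx hd).
  by rewrite {1}(ker_pi_frame (TGr_im hd.1 pi_i)) {1}(ker_pi_frame (TGr_im hd.1 pi_j)).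
apply: memv_suml => m _; apply: memvZ; rewrite -tnth_nth.
exact/memv_span/mem_tnth.
Qed.

Lemma TMS_exists_unique a0 a1 a2 a3 b0 b1 b2 b3 :
  let u := frame_comb 0 0 0 a0 a1 a2 a3 in let w := frame_comb 0 0 0 b0 b1 b2 b3 in
  exists d, [/\ inTMS' pi d, d *m i = u, d *m j = w &
    forall d', inTMS' pi d' -> d' *m i = u -> d' *m j = w -> d' = d].
Proof.
move=> u w; exists (tangent_mx u w); split.
- exact: tangent_mx_TMS.
- exact: tangent_mx_i.
- exact: tangent_mx_j.
by move=> d' hd' d'i d'j; rewrite (TMS_eq_tangent_mx hd') d'i d'j.
Qed.

End Tangent.

Lemma sum_perp_frame (a : 'I_4 -> R) :
  \sum_(r < 4) a r *: [:: l; cross i l; cross j l; cross k l]`_r =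
  frame_comb 0 0 0 (a (inord 0)) (a (inord 1)) (a (inord 2)) (a (inord 3)).
Proof.
rewrite sum_ord_iota /= !big_cons big_nil addr0 !inordK //= frame_combE.
by rewrite !scale0r !add0r !addrA.
Qed.
End QuaternionFrame.

Unset Implicit Arguments.

Theorem mainTheorem16 (R : realFieldType) (pi : 'M[R]_7)
    (i j l : 'cV[R]_7) :
  inMS' pi ->
  inIm pi i -> inIm pi j ->
  innp i i = 1 -> innp j j = 1 -> innp i j = 0 ->
  (forall v, inIm pi v -> innp l v = 0) -> innp l l = 1 ->
  let k := cross i j in
  let v := fun r : 'I_4 =>
    [:: l; cross i l; cross j l; cross k l]`_r in
  [/\ (forall a b : 'I_4 -> R,
         exists d : 'M[R]_7,
           [/\ inTMS' pi d,
               d *m i = \sum_(r < 4) a r *: v r,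
               d *m j = \sum_(r < 4) b r *: v r &
               forall d' : 'M[R]_7,
                 inTMS' pi d' ->
                 d' *m i = \sum_(r < 4) a r *: v r ->
                 d' *m j = \sum_(r < 4) b r *: v r -> d' = d]),
      (exists U : {vspace 'M[R]_7},
         (forall d, d \in U <-> inTMS' pi d) /\ \dim U = 8%N) &
      ((forall d, inTMS' pi d -> inTGr pi d) /\
       forall d1 d2 d3, inTMS' pi d1 -> inTMS' pi d2 -> inTMS' pi d3 ->
         inTMS' pi (brk (brk d1 d2) d3))].
Proof.
move=> MS iV jV ii jj ij l_perp ll k v.
have kV : inIm pi k.
  by exists k; rewrite (im_pi_cross MS) ?(inIm_fixed MS).
have li := l_perp i iV; have lj := l_perp j jV; have lk := l_perp k kV.
split.
- move=> a b; rewrite !sum_perp_frame.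
  exact: (TMS_exists_unique ii jj ij ll li lj lk MS iV jV l_perp).
- exists <<tangent_tuple i j l>>%VS; split.
    exact: (tangent_tuple_span ii jj ij ll li lj lk MS iV jV l_perp).
  exact: (tangent_tuple_dim ii jj ij ll li lj lk).
- split; first by move=> d [].
  exact: (TMS_triple ii jj ij ll li lj lk MS iV jV l_perp).
Qed.
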